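(* Consider EF-BV with $R$ proper closed convex and $f$ $L$-smooth. For every $t\ge0$, with $u^{t+1}=\frac1\gamma(x^t-x^{t+1})-g^{t+1}$ (which belongs to $\partial R(x^{t+1})$), $$f(x^{t+1})+R(x^{t+1})\le f(x^t)+R(x^t)+\frac\gamma2\|\nabla f(x^t)-g^{t+1}\|^2+\Big(\frac L2-\frac1{2\gamma}+\frac{\gamma L^2}{2}\Big)\|x^{t+1}-x^t\|^2-\frac\gamma4\|\nabla f(x^{t+1})+u^{t+1}\|^2 .$$
   Context: $f:\mathbb{R}^d\to\mathbb{R}$ is differentiable with $L$-Lipschitz gradient; $R:\mathbb{R}^d\to\mathbb{R}\cup\{+\infty\}$ proper closed convex, $\mathrm{prox}_{\gamma R}(x)=\arg\min_y(\gamma R(y)+\frac12\|x-y\|^2)$, $\gamma>0$. In EF-BV the iterates satisfy $x^{t+1}=\mathrm{prox}_{\gamma R}(x^t-\gamma g^{t+1})$, where $g^{t+1}\in\mathbb{R}^d$ is the (arbitrary, possibly random) gradient estimate computed at iteration $t$; the inequality holds pointwise for any such $x^t$, $g^{t+1}$, $x^{t+1}$ with $x^t$ in the domain of $R$. *)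

From HB Require Import structures.
From mathcomp Require Import all_boot all_order all_algebra.
From mathcomp Require Import all_classical all_reals all_analysis.
Set Implicit Arguments. Unset Strict Implicit. Unset Printing Implicit Defensive.
Import Order.TTheory GRing.Theory Num.Theory.
Import numFieldNormedType.Exports.
Local Open Scope classical_set_scope.
Local Open Scope ring_scope.

Section Defs.
Context {R : realType} {d : nat}.

Definition dotv (u v : 'rV[R]_d) : R := \sum_(i < d) u ord0 i * v ord0 i.
Definition sqnorm (u : 'rV[R]_d) : R := dotv u u.
Definition enorm (u : 'rV[R]_d) : R := Num.sqrt (sqnorm u).

Definition has_gradient (f : 'rV[R]_d -> R) (gradf : 'rV[R]_d -> 'rV[R]_d) :=
  forall x, differentiable f x /\ forall v, ('d f x : 'rV[R]_d -> R) v = dotv (gradf x) v.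

Definition lipschitz_grad (gradf : 'rV[R]_d -> 'rV[R]_d) (L : R) :=
  forall x y, enorm (gradf x - gradf y) <= L * enorm (x - y).

Definition proper_fun (Rf : 'rV[R]_d -> \bar R) :=
  (forall x, Rf x != -oo%E) /\ (exists x, Rf x != +oo%E).

(* closed = epigraph closed (equivalently lower semicontinuous) *)
Definition closed_fun (Rf : 'rV[R]_d -> \bar R) :=
  closed [set p : 'rV[R]_d * R | (Rf p.1 <= p.2%:E)%E].

(* convex = epigraph convex *)
Definition convex_fun (Rf : 'rV[R]_d -> \bar R) :=
  forall x y (a b t : R), (Rf x <= a%:E)%E -> (Rf y <= b%:E)%E ->
    0 <= t -> t <= 1 ->
    (Rf (t *: x + (1 - t) *: y)%R <= (t * a + (1 - t) * b)%:E)%E.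

Definition is_prox (gamma : R) (Rf : 'rV[R]_d -> \bar R) (z p : 'rV[R]_d) :=
  forall y, (gamma%:E * Rf p + (sqnorm (z - p) / 2)%:E
             <= gamma%:E * Rf y + (sqnorm (z - y) / 2)%:E)%E.

End Defs.

(* The prox step makes (x^t - x^{t+1})/gamma - g a subgradient of R at x^{t+1}, which gives
   R(x^{t+1}) <= R(x^t) - |s|^2/gamma - <g, s> for s = x^{t+1} - x^t; the descent lemma bounds
   f(x^{t+1}) by f(x^t) + <grad f(x^t), s> + L/2 |s|^2.  The extra negative term is paid for by
   writing grad f(x^{t+1}) + u = (grad f(x^t) - g - s/gamma) + (grad f(x^{t+1}) - grad f(x^t))
   and using |p + q|^2 <= 2|p|^2 + 2|q|^2 together with the Lipschitz bound on the gradient. *)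
From HB Require Import structures.
From mathcomp Require Import all_boot all_order all_algebra.
From mathcomp Require Import all_classical all_reals all_analysis.
From mathcomp Require Import ring lra.
Import Order.TTheory GRing.Theory Num.Theory.
Import numFieldNormedType.Exports.
Local Open Scope ring_scope.

Section Euclidean.
Context {R : realType} {d : nat}.
Implicit Types u v w : 'rV[R]_d.

Lemma dotvC u v : dotv u v = dotv v u.
Proof. by apply: eq_bigr => i _; rewrite mulrC. Qed.

Lemma dotvDl u v w : dotv (u + v) w = dotv u w + dotv v w.
Proof. by rewrite /dotv -big_split; apply: eq_bigr => i _; rewrite mxE mulrDl. Qed.

Lemma dotvZl (a : R) u w : dotv (a *: u) w = a * dotv u w.
Proof. by rewrite /dotv mulr_sumr; apply: eq_bigr => i _; rewrite mxE mulrA. Qed.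

Lemma dotvNl u w : dotv (- u) w = - dotv u w.
Proof. by rewrite -scaleN1r dotvZl mulN1r. Qed.

Lemma dotvBl u v w : dotv (u - v) w = dotv u w - dotv v w.
Proof. by rewrite dotvDl dotvNl. Qed.

Lemma dotvDr u v w : dotv w (u + v) = dotv w u + dotv w v.
Proof. by rewrite dotvC dotvDl !(dotvC w). Qed.

Lemma dotvZr (a : R) u w : dotv w (a *: u) = a * dotv w u.
Proof. by rewrite dotvC dotvZl dotvC. Qed.

Lemma dotvBr u v w : dotv w (u - v) = dotv w u - dotv w v.
Proof. by rewrite dotvC dotvBl !(dotvC w). Qed.

Lemma dotv0l w : dotv 0 w = 0.
Proof. by rewrite /dotv big1 // => i _; rewrite mxE mul0r. Qed.

Lemma sqnorm_ge0 u : 0 <= sqnorm u.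
Proof. by apply: sumr_ge0 => i _; rewrite -expr2 sqr_ge0. Qed.

Lemma sqnorm_eq0 u : sqnorm u = 0 -> u = 0.
Proof.
move=> /eqP; rewrite /sqnorm /dotv psumr_eq0 => [/allP u0|i _]; last first.
  by rewrite -expr2 sqr_ge0.
apply/rowP => i; rewrite mxE.
by have := u0 i (mem_index_enum i); rewrite mulf_eq0 orbb => /eqP; rewrite (ord1 ord0).
Qed.

Lemma sqnormD u v : sqnorm (u + v) = sqnorm u + 2 * dotv u v + sqnorm v.
Proof. rewrite /sqnorm dotvDl !dotvDr (dotvC v u); ring. Qed.

Lemma sqnormB u v : sqnorm (u - v) = sqnorm u - 2 * dotv u v + sqnorm v.
Proof. rewrite /sqnorm dotvBl !dotvBr (dotvC v u); ring. Qed.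

Lemma sqnormZ (a : R) u : sqnorm (a *: u) = a ^+ 2 * sqnorm u.
Proof. rewrite /sqnorm dotvZl dotvZr; ring. Qed.

Lemma sqnormD_le u v : sqnorm (u + v) <= 2 * sqnorm u + 2 * sqnorm v.
Proof.
have := sqnorm_ge0 (u - v); rewrite sqnormB sqnormD; lra.
Qed.

Lemma enorm_ge0 u : 0 <= enorm u.
Proof. exact: sqrtr_ge0. Qed.

Lemma enorm_sq u : enorm u ^+ 2 = sqnorm u.
Proof. by rewrite /enorm sqr_sqrtr // sqnorm_ge0. Qed.

Lemma enormZ (a : R) u : enorm (a *: u) = `|a| * enorm u.
Proof. by rewrite /enorm sqnormZ sqrtrM ?sqr_ge0 // sqrtr_sqr. Qed.

Lemma enorm_eq0 u : enorm u = 0 -> u = 0.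
Proof. by move=> u0; apply: sqnorm_eq0; rewrite -enorm_sq u0 expr0n. Qed.

Lemma cauchy_schwarz u v : dotv u v <= enorm u * enorm v.
Proof.
have [/enorm_eq0 ->|u0] := eqVneq (enorm u) 0; first by rewrite dotv0l mulr_ge0 ?enorm_ge0.
have [/enorm_eq0 ->|v0] := eqVneq (enorm v) 0.
  by rewrite dotvC dotv0l mulr_ge0 ?enorm_ge0.
have uv_gt0 : 0 < enorm u * enorm v by rewrite mulr_gt0 // lt_def ?u0 ?v0 enorm_ge0.
(* expand 0 <= |(|v|) u - (|u|) v|^2 and divide by |u| |v| *)
have := sqnorm_ge0 (enorm v *: u - enorm u *: v).
rewrite sqnormB !sqnormZ dotvZl dotvZr -!enorm_sq => expansion_ge0.
rewrite -(ler_pM2l uv_gt0); nra.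
Qed.

Lemma lipschitz_grad_sqnorm {gradf : 'rV[R]_d -> 'rV[R]_d} {L : R} :
  lipschitz_grad gradf L ->
  forall x y, sqnorm (gradf x - gradf y) <= L ^+ 2 * sqnorm (x - y).
Proof.
move=> gradf_lip x y; have lipL := gradf_lip x y; rewrite -!enorm_sq.
have := enorm_ge0 (gradf x - gradf y); nra.
Qed.

End Euclidean.

Section Smooth.
Context {R : realType} {d : nat}.
Context {f : 'rV[R]_d -> R} {gradf : 'rV[R]_d -> 'rV[R]_d} {L : R}.
Hypothesis f_grad : has_gradient f gradf.

Lemma is_derive_along (x s : 'rV[R]_d) (t : R) :
  is_derive t (1 : R) (fun t => f (x + t *: s)) (dotv (gradf (x + t *: s)) s).
Proof.
pose h t := f (x + t *: s).
have [f_diff f_dir] := f_grad (x + t *: s).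
have quotE : (fun e : R => e^-1 *: ((h \o shift t) (e *: 1) - h t)) =
    (fun e => e^-1 *: ((f \o shift (x + t *: s)) (e *: s) - f (x + t *: s))).
  by apply/funext => e /=; rewrite /h [e *: 1]mulr1 scalerDl addrCA.
split; first by rewrite /derivable quotE; exact: diff_derivable.
by rewrite /derive quotE -/(derive f _ s) deriveE // f_dir.
Qed.

Hypothesis gradf_lip : lipschitz_grad gradf L.

Lemma descent_lemma (x s : 'rV[R]_d) :
  f (x + s) <= f x + dotv (gradf x) s + L / 2 * sqnorm s.
Proof.
pose h t := f (x + t *: s).
pose c := L / 2 * sqnorm s.
(* phi t = f (x + t s) - t <grad f(x), s> - c t^2 has a nonpositive derivative on [0, 1] *)
pose phi := h - dotv (gradf x) s \*: @id R - c \*: (@id R * @id R).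
pose dphi t := dotv (gradf (x + t *: s)) s - dotv (gradf x) s - c * (2 * t).
have phi_derive t : is_derive t (1 : R) phi (dphi t).
  have := is_derive_along x s t; rewrite -/h => h_derive.
  by apply: is_derive_eq; rewrite /dphi /GRing.scale /=; ring.
have [t t01 phi10] := MVT_segment ler01 (fun t _ => phi_derive t)
  (derivable_within_continuous (fun t _ => @ex_derive _ _ _ _ _ _ _ (phi_derive t))).
have dphi_le0 : dphi t <= 0.
  move: t01; rewrite in_itv /= => /andP[t_ge0 t_le1].
  have lip := gradf_lip (x + t *: s) x.
  rewrite addrAC subrr add0r enormZ ger0_norm // in lip.
  have := cauchy_schwarz (gradf (x + t *: s) - gradf x) s.
  have := ler_wpM2r (enorm_ge0 s) lip.
  rewrite /dphi /c -dotvBl -(enorm_sq s); nra.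
have phi1 : phi 1 = f (x + 1 *: s) - dotv (gradf x) s * 1 - c * (1 * 1) by [].
have phi0 : phi 0 = f (x + 0 *: s) - dotv (gradf x) s * 0 - c * (0 * 0) by [].
move: phi10 dphi_le0; rewrite phi1 phi0 scale1r scale0r addr0 -/c; lra.
Qed.

End Smooth.

Lemma ler_add_vanishing (R : realFieldType) (a b c : R) : 0 <= c ->
  (forall t, 0 < t -> t <= 1 -> a <= b + t * c) -> a <= b.
Proof.
move=> c_ge0 abc; apply/ler_addgt0Pr => e e_gt0.
pose t := e / (e + c + 1).
have tE : t * (e + c + 1) = e by rewrite /t mulfVK // gt_eqF //; lra.
have t_gt0 : 0 < t by rewrite /t divr_gt0 //; lra.
have := abc t t_gt0; nra.
Qed.

Section Prox.
Context {R : realType} {d : nat}.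
Context {Rf : 'rV[R]_d -> \bar R} {gamma : R} {z p : 'rV[R]_d}.
Hypotheses (gamma_gt0 : 0 < gamma) (Rf_ninfty : forall x, Rf x != -oo%E).
Hypothesis p_prox : is_prox gamma Rf z p.

Lemma prox_fin_num {y r} : Rf y = r%:E -> exists rp, Rf p = rp%:E.
Proof.
have := p_prox y; have := Rf_ninfty p.
case: (Rf p) => [rp| |] // _; first by exists rp.
by rewrite mulr_infty gtr0_sg // mul1e addye // => /[swap] ->.
Qed.

Lemma prox_variational_ineq {y r rp} : convex_fun Rf ->
  Rf y = r%:E -> Rf p = rp%:E -> gamma * rp + dotv (z - p) (y - p) <= gamma * r.
Proof.
move=> Rf_cvx Rfy Rfp.
apply: (@ler_add_vanishing _ _ _ (sqnorm (y - p) / 2)) => [|t t_gt0 t_le1].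
  by rewrite divr_ge0 // sqnorm_ge0.
pose yt := t *: y + (1 - t) *: p.
have := Rf_cvx y p r rp t; rewrite Rfy Rfp !lexx => /(_ erefl erefl (ltW t_gt0) t_le1).
have := p_prox yt; rewrite -/yt Rfp.
case: (Rf yt) (Rf_ninfty yt) => [ryt| |] //= _; rewrite -!EFinM -!EFinD !lee_fin.
have -> : z - yt = (z - p) - t *: (y - p) by apply/rowP => i; rewrite !mxE; ring.
rewrite [sqnorm (_ - t *: _)]sqnormB sqnormZ dotvZr => prox_yt cvx_yt.
have gamma_cvx_yt := ler_wpM2l (ltW gamma_gt0) cvx_yt.
rewrite -(ler_pM2l t_gt0); nra.
Qed.

End Prox.

Lemma residual_sqnorm_le {R : realType} {d : nat} {gradf : 'rV[R]_d -> 'rV[R]_d}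
    {L gamma : R} (xt g x1 : 'rV[R]_d) :
  lipschitz_grad gradf L -> 0 < gamma ->
  gamma / 4 * sqnorm (gradf x1 + (gamma^-1 *: (xt - x1) - g))
  <= gamma / 2 * sqnorm (gradf xt - g) - dotv (gradf xt - g) (x1 - xt)
     + (gamma^-1 / 2 + gamma * L ^+ 2 / 2) * sqnorm (x1 - xt).
Proof.
move=> gradf_lip gamma_gt0.
set a := gradf xt - g; set s := x1 - xt.
have -> : gradf x1 + (gamma^-1 *: (xt - x1) - g)
          = (a - gamma^-1 *: s) + (gradf x1 - gradf xt).
  by apply/rowP => i; rewrite !mxE; ring.
have split_le := sqnormD_le (a - gamma^-1 *: s) (gradf x1 - gradf xt).
rewrite [sqnorm (a - _)]sqnormB sqnormZ dotvZr in split_le.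
have gamma4_ge0 : 0 <= gamma / 4 by rewrite divr_ge0 // ltW.
have := ler_wpM2l gamma4_ge0 split_le.
have -> : gamma / 4 * (2 * (sqnorm a - 2 * (gamma^-1 * dotv a s)
            + gamma^-1 ^+ 2 * sqnorm s) + 2 * sqnorm (gradf x1 - gradf xt))
          = gamma / 2 * sqnorm a - dotv a s + gamma^-1 / 2 * sqnorm s
            + gamma / 2 * sqnorm (gradf x1 - gradf xt).
  by field; rewrite gt_eqF.
have := lipschitz_grad_sqnorm gradf_lip x1 xt; rewrite -/s => lip.
have := ler_wpM2l (ltW gamma_gt0) lip; lra.
Qed.

Theorem mainTheorem14 (R : realType) (d : nat)
  (f : 'rV[R]_d -> R) (gradf : 'rV[R]_d -> 'rV[R]_d) (L : R)
  (Rf : 'rV[R]_d -> \bar R) (gamma : R)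
  (xt g x1 : 'rV[R]_d) :
  has_gradient f gradf -> lipschitz_grad gradf L ->
  proper_fun Rf -> closed_fun Rf -> convex_fun Rf ->
  0 < gamma ->
  Rf xt != +oo%E ->
  is_prox gamma Rf (xt - gamma *: g) x1 ->
  let u := gamma^-1 *: (xt - x1) - g in
  ((f x1)%:E + Rf x1
   <= (f xt)%:E + Rf xt
      + (gamma / 2 * sqnorm (gradf xt - g)
         + (L / 2 - 1 / (2 * gamma) + gamma * L ^+ 2 / 2) * sqnorm (x1 - xt)
         - gamma / 4 * sqnorm (gradf x1 + u))%:E)%E.
Proof.
move=> f_grad gradf_lip [Rf_ninfty _] _ Rf_cvx gamma_gt0 Rfxt_fin x1_prox.
rewrite [in X in is_true X]/=.
have [r0 Rfxt] : exists r0, Rf xt = r0%:E.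
  by case: (Rf xt) (Rf_ninfty xt) Rfxt_fin => [r0| |] // _ _; exists r0.
have [r1 Rfx1] := prox_fin_num gamma_gt0 Rf_ninfty x1_prox Rfxt.
rewrite Rfxt Rfx1 -!EFinD lee_fin.
set s := x1 - xt.
have prox_step : r1 <= r0 - gamma^-1 * sqnorm s - dotv g s.
  have := prox_variational_ineq gamma_gt0 Rf_ninfty x1_prox Rf_cvx Rfxt Rfx1.
  have -> : xt - gamma *: g - x1 = (-1) *: s - gamma *: g.
    by apply/rowP => i; rewrite !mxE; ring.
  have -> : xt - x1 = (-1) *: s by apply/rowP => i; rewrite !mxE; ring.
  rewrite dotvBl !dotvZl !dotvZr (dotvC g) -/(sqnorm s) => gamma_step.
  rewrite -(ler_pM2l gamma_gt0) !mulrBr mulrA mulfV ?gt_eqF // mul1r; lra.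
have := descent_lemma f_grad gradf_lip xt s; rewrite subrKC.
have := residual_sqnorm_le xt g x1 gradf_lip gamma_gt0; rewrite -/s dotvBl.
have -> : 1 / (2 * gamma) = gamma^-1 / 2 by field; rewrite gt_eqF.
lra.
Qed.
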